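(* Let $G=(V,E;w)$ be a graph with no isolated vertices and nonnegative edge weights $w$, and let $c$ be the cost function of the edge cover game on $G$. A vector $a\in\mathbb{R}_{\ge 0}^{V}$ satisfies $a(S)\le c(S)$ for all $S\subseteq V$ if and only if for every vertex $v\in V$ and every nonempty subset $T\subseteq N(v)$ we have $a(T\cup\{v\})\le \sum_{u\in T} w_{vu}$.
   Context: $N(v)$ is the set of neighbours of $v$. For $a\in\mathbb{R}^V$ and $S\subseteq V$, $a(S)=\sum_{i\in S}a_i$. The edge cover game on $G$ has player set $V$ and cost function $c:2^V\to\mathbb{R}_{\ge0}$, where $c(S)$ is the minimum total weight $\sum_{e\in K}w_e$ over edge sets $K\subseteq E$ such that every vertex of $S$ is incident to at least one edge of $K$ (equivalently, $K\subseteq E[S]\cup\delta(S)$, where $E[S]$ is the set of edges with both ends in $S$ and $\delta(S)$ the set of edges with exactly one end in $S$); $c(\emptyset)=0$. *)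

From mathcomp Require Import all_boot all_order all_algebra.
Set Implicit Arguments. Unset Strict Implicit. Unset Printing Implicit Defensive.
Import Order.TTheory GRing.Theory Num.Theory.
Local Open Scope ring_scope.

(* A (simple, loopless) graph on the finite vertex type V is given by its edge
   set E : {set {set V}}, each edge being a 2-element subset of V.
   Edge weights are a function w : {set V} -> R (only its values on E matter);
   w_{vu} is w [set v; u]. *)

Definition is_graph (V : finType) (E : {set {set V}}) : Prop :=
  forall f, f \in E -> #|f| = 2%N.

Definition no_isolated (V : finType) (E : {set {set V}}) : Prop :=
  forall v : V, exists2 f, f \in E & v \in f.

Definition nonneg_weights (R : realFieldType) (V : finType)
  (E : {set {set V}}) (w : {set V} -> R) : Prop :=
  forall f, f \in E -> 0 <= w f.

Definition nbhd (V : finType) (E : {set {set V}}) (v : V) : {set V} :=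
  [set u | [set v; u] \in E].

Definition covers (V : finType) (K : {set {set V}}) (S : {set V}) : bool :=
  [forall v in S, [exists f in K, v \in f]].

Definition wsum (R : realFieldType) (V : finType) (w : {set V} -> R)
  (K : {set {set V}}) : R := \sum_(f in K) w f.

(* The minimum is taken with
   initial value w(E); when G has no isolated vertices E itself covers every S,
   so this is exactly the minimum over the feasible edge sets. *)
Definition ec_cost (R : realFieldType) (V : finType) (E : {set {set V}})
  (w : {set V} -> R) (S : {set V}) : R :=
  \big[Num.min/wsum w E]_(K : {set {set V}} | (K \subset E) && covers K S)
     wsum w K.

Definition aset (R : realFieldType) (V : finType) (a : V -> R) (S : {set V}) : R :=
  \sum_(i in S) a i.

From mathcomp Require Import all_boot all_order all_algebra.
Import Order.TTheory GRing.Theory Num.Theory.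
Set Implicit Arguments. Unset Strict Implicit. Unset Printing Implicit Defensive.
Local Open Scope ring_scope.

(* Call a vector a "edge-feasible" for an edge set K when a(f) <= w(f) for
   every edge f of K.  The core fact (cover_bound) is that, for a >= 0, an
   edge-feasible a satisfies a(S) <= w(K) whenever K covers S: send every
   vertex of S to one chosen incident edge of K, so a(S) splits into sums over
   the edges, each bounded by a(f) <= w(f).
   - (<=) The star condition with |T| = 1 says exactly that a is
     edge-feasible for E (edge_bound); by cover_bound a(S) <= w(K) for every
     feasible K, hence a(S) <= c(S) (le_ec_cost, which needs no isolated
     vertices so that E itself is feasible).
   - (=>) The star K = {vu : u in T} of v is a feasible edge set for v + T
     whose weight is sum_{u in T} w_vu (star_* lemmas), so
     a(v + T) <= c(v + T) <= w(K) (ec_cost_le). *)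

Section CostFunction.
Variables (R : realFieldType) (V : finType) (E : {set {set V}}).
Variable (w : {set V} -> R).

Lemma ec_cost_le (S : {set V}) (K : {set {set V}}) :
  K \subset E -> covers K S -> ec_cost E w S <= wsum w K.
Proof.
move=> KE covK.
by apply: bigmin_le_cond; rewrite KE covK.
Qed.

Lemma covers_all (S : {set V}) : no_isolated E -> covers E S.
Proof.
move=> hiso; apply/forall_inP => v _; have [f fE vf] := hiso v.
by apply/existsP; exists f; rewrite fE.
Qed.

Lemma le_ec_cost (S : {set V}) (x : R) : no_isolated E ->
  (forall K : {set {set V}}, K \subset E -> covers K S -> x <= wsum w K) ->
  x <= ec_cost E w S.
Proof.
move=> hiso lbK; apply: le_bigmin => [|K /andP [KE covK]]; last exact: lbK.
exact: lbK (subxx E) (covers_all S hiso).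
Qed.

End CostFunction.

Lemma cover_bound (R : realFieldType) (V : finType) (w : {set V} -> R)
  (a : V -> R) (K : {set {set V}}) (S : {set V}) :
  (forall v, 0 <= a v) -> (forall f, f \in K -> aset a f <= w f) ->
  covers K S -> aset a S <= wsum w K.
Proof.
move=> ha edgeK /forall_inP covK.
(* g assigns to each covered vertex one incident edge of K. *)
pose g v := odflt set0 [pick f in K | v \in f].
have gP v : v \in S -> g v \in K /\ v \in g v.
  move=> /covK /existsP [f /andP [fK vf]].
  rewrite /g; case: pickP => [f' /andP [] //|/(_ f)]; by rewrite fK vf.
rewrite /aset /wsum (partition_big g (mem K)) /=; last by move=> v /gP [].
apply: ler_sum => f fK; apply: le_trans (edgeK f fK).
(* The vertices sent to f all lie in f. *)
have part_f : \sum_(v in S | g v == f) a v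
            = \sum_(v in f | (v \in S) && (g v == f)) a v.
  apply: eq_bigl => v; case vS: (v \in S); rewrite ?andbF //=.
  by case: eqP => [<-|]; rewrite ?andbF ?andbT //; case: (gP v vS).
rewrite part_f [X in _ <= X](bigID (fun v => (v \in S) && (g v == f))) /=.
by rewrite lerDl sumr_ge0.
Qed.

Section Stars.
Variables (V : finType) (E : {set {set V}}).

Definition star (v : V) (T : {set V}) : {set {set V}} :=
  [set [set v; u] | u in T].

Lemma star_sub (v : V) (T : {set V}) :
  T \subset nbhd E v -> star v T \subset E.
Proof.
move=> Tsub; apply/subsetP => f /imsetP [u uT ->].
by have := subsetP Tsub u uT; rewrite inE.
Qed.

Lemma nbhd_neq (v u : V) : is_graph E -> u \in nbhd E v -> u != v.
Proof.
by move=> hG; rewrite inE => /hG; rewrite cards2 eq_sym; case: (u == v).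
Qed.

Lemma star_covers (v : V) (T : {set V}) :
  T != set0 -> covers (star v T) (v |: T).
Proof.
move=> /set0Pn [u0 u0T]; apply/forall_inP => x.
have inS u : u \in T -> [set v; u] \in star v T by move=> uT; apply: imset_f.
rewrite in_setU1 => /orP [/eqP ->|xT]; apply/existsP.
  by exists [set v; u0]; rewrite inS // !inE eqxx.
by exists [set v; x]; rewrite inS // !inE eqxx orbT.
Qed.

(* When v is not in T, the edges of the star are distinct. *)
Lemma wsum_star (R : realFieldType) (w : {set V} -> R) (v : V) (T : {set V}) :
  v \notin T -> wsum w (star v T) = \sum_(u in T) w [set v; u].
Proof.
move=> vT; rewrite /wsum big_imset // => u u' uT _ /= e.
have : u \in [set v; u'] by rewrite -e !inE eqxx orbT.
have uv : u != v by apply: contraNneq vT => <-.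
by rewrite !inE (negbTE uv) => /eqP.
Qed.

(* The star condition on singletons T = {u} is the edge inequality. *)
Lemma edge_bound (R : realFieldType) (w : {set V} -> R) (a : V -> R) :
  is_graph E ->
  (forall (v : V) (T : {set V}), T != set0 -> T \subset nbhd E v ->
     aset a (v |: T) <= \sum_(u in T) w [set v; u]) ->
  forall f, f \in E -> aset a f <= w f.
Proof.
move=> hG hstar f fE; have /eqP/cards2P [x [y [_ ef]]] := hG f fE.
have y0 : [set y] != set0 by apply/set0Pn; exists y; rewrite inE.
have yN : [set y] \subset nbhd E x by rewrite sub1set inE -ef.
by have := hstar x [set y] y0 yN; rewrite big_set1 ef.
Qed.

End Stars.

Theorem lemma5 (R : realFieldType) (V : finType) (E : {set {set V}})
  (w : {set V} -> R) (a : V -> R)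
  (hG : is_graph E) (hiso : no_isolated E) (hw : nonneg_weights E w)
  (ha : forall v, 0 <= a v) :
  (forall S : {set V}, aset a S <= ec_cost E w S) <->
  (forall (v : V) (T : {set V}), T != set0 -> T \subset nbhd E v ->
     aset a (v |: T) <= \sum_(u in T) w [set v; u]).
Proof.
split=> [core v T T0 TN | hstar S].
- have vT : v \notin T.
    by apply/negP => /(subsetP TN) /(nbhd_neq hG); rewrite eqxx.
  rewrite -(wsum_star w vT); apply: le_trans (core _) _.
  exact: ec_cost_le (star_sub TN) (star_covers v T0).
- apply: le_ec_cost hiso _ => K KE covK.
  apply: cover_bound ha _ covK => f fK.
  exact: edge_bound hG hstar f (subsetP KE f fK).
Qed.
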